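(* Let $f:(\mathbb R^2,q)\to(\mathbb R^3,p)$ be a smooth germ with a corank 1 singularity at $q$ whose curvature parabola $\Delta_p$ is a non-degenerate parabola or a half-line (equivalently, $j^2f$ is $\mathcal A^2$-equivalent to $(x,y^2,xy)$ or $(x,y^2,0)$). If $(u,v)$ is a coordinate system with $f_u(q)\ne0$ and $f_v(q)=0$, then $$v_a=\frac{(f_u\times f_{vv})\times f_u}{|(f_u\times f_{vv})\times f_u|}(q),$$ and if moreover $|f_u(q)|=|f_{vv}(q)|=1$ and $\langle f_u(q),f_{vv}(q)\rangle=0$, then $v_a=f_{vv}(q)$.
   Context: $T_pM=\operatorname{im}df_q$, $N_pM$ its orthogonal complement with a fixed orientation. First fundamental form $I(X,Y)=\langle df_qX,df_qY\rangle$; second fundamental form $II$: the symmetric bilinear map $T_q\mathbb R^2\times T_q\mathbb R^2\to N_pM$ with $II(\partial_u,\partial_u)=f_{uu}(q)^\perp$, $II(\partial_u,\partial_v)=f_{uv}(q)^\perp$, $II(\partial_v,\partial_v)=f_{vv}(q)^\perp$ ($\perp$ = orthogonal projection to $N_pM$). Curvature parabola $\Delta_p=\{II(X,X): I(X,X)=1\}\subset N_pM$. Axial vector $v_a$: if $\Delta_p$ is a non-degenerate parabola, the unit vector along its axis of symmetry pointing to its interior; if $\Delta_p$ is a half-line, the unit vector in the direction in which the half-line extends. *)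

From HB Require Import structures.
From mathcomp Require Import all_boot all_order all_algebra.
From mathcomp Require Import all_classical all_reals all_analysis.
Set Implicit Arguments. Unset Strict Implicit. Unset Printing Implicit Defensive.
Import Order.TTheory GRing.Theory Num.Theory.
Import numFieldNormedType.Exports.
Local Open Scope classical_set_scope.
Local Open Scope ring_scope.

Section Defs.
Variable R : realType.
Local Notation V2 := 'rV[R]_2.
Local Notation V3 := 'rV[R]_3.

(** Euclidean inner product, norm and cross product on R^3
    (the library norm on 'rV is the max-norm, so we define the Euclidean one). *)
Definition dot3 (a b : V3) : R := \sum_(i < 3) a 0 i * b 0 i.
Definition enorm3 (a : V3) : R := Num.sqrt (dot3 a a).
Definition mk3 (x y z : R) : V3 := \row_(k < 3) nth 0 [:: x; y; z] k.
Definition cross3 (a b : V3) : V3 :=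
  mk3 (a 0 1 * b 0 2 - a 0 2 * b 0 1)
      (a 0 2 * b 0 0 - a 0 0 * b 0 2)
      (a 0 0 * b 0 1 - a 0 1 * b 0 0).

Definition e_u : V2 := \row_(j < 2) (if j == 0 :> nat then 1 else 0).
Definition e_v : V2 := \row_(j < 2) (if j == 1 :> nat then 1 else 0).

Fixpoint iterD (vs : seq V2) (f : V2 -> V3) : V2 -> V3 :=
  match vs with
  | [::] => f
  | v :: vs' => 'D_v (iterD vs' f)
  end.

Definition smooth_near (f : V2 -> V3) (q : V2) : Prop :=
  forall vs : seq V2, \forall x \near q,
    {for x, continuous (iterD vs f)} /\ (forall v : V2, derivable (iterD vs f) x v).

Definition jacobian (f : V2 -> V3) (q : V2) : 'M[R]_(2, 3) :=
  \matrix_(i < 2, k < 3) ('D_(if i == 0 :> nat then e_u else e_v) f q) 0 k.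
Definition corank1 (f : V2 -> V3) (q : V2) : Prop := \rank (jacobian f q) = 1%N.

Definition df (f : V2 -> V3) (q : V2) (X : V2) : V3 := 'D_X f q.
Definition fu f q : V3 := 'D_e_u f q.
Definition fv f q : V3 := 'D_e_v f q.
Definition fuu f q : V3 := 'D_e_u ('D_e_u f) q.
Definition fuv f q : V3 := 'D_e_v ('D_e_u f) q.
Definition fvv f q : V3 := 'D_e_v ('D_e_v f) q.

Definition firstFF (f : V2 -> V3) (q : V2) (X Y : V2) : R := dot3 (df f q X) (df f q Y).

Definition tangentSp (f : V2 -> V3) (q : V2) : set V3 := range (df f q).
Definition normalSp (f : V2 -> V3) (q : V2) : set V3 :=
  [set n | forall t, tangentSp f q t -> dot3 n t = 0].

Definition nproj (f : V2 -> V3) (q : V2) (w n : V3) : Prop :=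
  normalSp f q n /\ tangentSp f q (w - n).

(** II(X,X) for X = a d/du + b d/dv, by symmetric bilinear extension of
    II(du,du)=f_uu^perp, II(du,dv)=f_uv^perp, II(dv,dv)=f_vv^perp *)
Definition secondFF_XX (f : V2 -> V3) (q : V2) (X : V2) (n : V3) : Prop :=
  exists n1 n2 n3, [/\ nproj f q (fuu f q) n1, nproj f q (fuv f q) n2,
    nproj f q (fvv f q) n3 &
    n = (X 0 0 ^+ 2) *: n1 + (2 * X 0 0 * X 0 1) *: n2 + (X 0 1 ^+ 2) *: n3].

Definition curvParabola (f : V2 -> V3) (q : V2) : set V3 :=
  [set n | exists X : V2, firstFF f q X X = 1 /\ secondFF_XX f q X n].

(** a non-degenerate parabola in standard form: vertex c, orthonormal frame
    (e1,e2), equation y = k x^2 with k > 0; its axis of symmetry is c + R e2,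
    and e2 points to its interior (convex side). *)
Definition parabolaSet (c e1 e2 : V3) (k : R) : set V3 :=
  [set c + t *: e1 + (k * t ^+ 2) *: e2 | t in [set: R]].
Definition is_nd_parabola (S : set V3) : Prop :=
  exists c e1 e2 (k : R), [/\ enorm3 e1 = 1, enorm3 e2 = 1, dot3 e1 e2 = 0, 0 < k &
    S = parabolaSet c e1 e2 k].

Definition halflineSet (c d : V3) : set V3 := [set c + s *: d | s in [set s : R | 0 <= s]].
Definition is_halfline (S : set V3) : Prop :=
  exists c d, d != 0 /\ S = halflineSet c d.

(** v is an axial vector of S: unit vector along the axis pointing to the
    interior (parabola case), or unit direction of extension (half-line case) *)
Definition axial_cand (S : set V3) (v : V3) : Prop :=
  (exists c e1 (k : R), [/\ enorm3 e1 = 1, enorm3 v = 1, dot3 e1 v = 0, 0 < k &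
      S = parabolaSet c e1 v k])
  \/ (exists c, enorm3 v = 1 /\ S = halflineSet c v).

Definition is_axial_vector (S : set V3) (v : V3) : Prop :=
  axial_cand S v /\ forall w, axial_cand S w -> w = v.

End Defs.

(* With f_v(q) = 0 we have df_q X = X_u f_u(q), so I(X, X) = 1 forces
   X_u = +-1/|f_u| and the curvature parabola is the quadratic curve
   t |-> A + t B + t^2 f_vv^perp.  The directions along which a linear form is
   bounded below on such a curve determine its leading coefficient up to a
   positive factor; hence, whether it is presented as a parabola or as a
   half-line, its axial vector is f_vv^perp / |f_vv^perp|, and
   (f_u x f_vv) x f_u = |f_u|^2 f_vv^perp.  That df_q is linear follows from
   the continuity of the directional derivatives by the mean value theorem. *)

From HB Require Import structures.
From mathcomp Require Import all_boot all_order all_algebra.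
From mathcomp Require Import all_classical all_reals all_analysis.
From mathcomp Require Import ring lra.
Set Implicit Arguments. Unset Strict Implicit. Unset Printing Implicit Defensive.
Import Order.TTheory GRing.Theory Num.Theory.
Import numFieldNormedType.Exports.
Local Open Scope classical_set_scope.
Local Open Scope ring_scope.

Section Euclid3.
Variable R : realType.
Implicit Types (a b c u : 'rV[R]_3) (s : R).

Lemma dot3E a b : dot3 a b = a 0 0 * b 0 0 + a 0 1 * b 0 1 + a 0 2 * b 0 2.
Proof.
rewrite /dot3 !big_ord_recr big_ord0 /= add0r.
by congr (_ * _ + _ * _ + _ * _); congr (_ _ _); apply: val_inj.
Qed.

Lemma dot3C a b : dot3 a b = dot3 b a.
Proof. rewrite !dot3E; ring. Qed.

Lemma dot3Dr a b c : dot3 a (b + c) = dot3 a b + dot3 a c.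
Proof. rewrite !dot3E !mxE; ring. Qed.

Lemma dot3Br a b c : dot3 a (b - c) = dot3 a b - dot3 a c.
Proof. rewrite !dot3E !mxE; ring. Qed.

Lemma dot3Zr s a b : dot3 a (s *: b) = s * dot3 a b.
Proof. rewrite !dot3E !mxE; ring. Qed.

Lemma dot3Bl a b c : dot3 (a - b) c = dot3 a c - dot3 b c.
Proof. by rewrite dot3C dot3Br !(dot3C c). Qed.

Lemma dot3Zl s a b : dot3 (s *: a) b = s * dot3 a b.
Proof. by rewrite dot3C dot3Zr dot3C. Qed.

Lemma dot3_ge0 a : 0 <= dot3 a a.
Proof. by apply: sumr_ge0 => i _; rewrite -expr2 sqr_ge0. Qed.

Lemma dot3_eq0 a : (dot3 a a == 0) = (a == 0).
Proof.
apply/eqP/eqP => [a0|->]; last by rewrite /dot3 big1 // => i _; rewrite mxE mul0r.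
apply/rowP => i; rewrite mxE; apply/eqP.
rewrite -[_ == 0]orbb -mulf_eq0; apply/eqP.
by apply: (psumr_eq0P _ a0) => // j _; rewrite -expr2 sqr_ge0.
Qed.

Lemma dot3_gt0 a : (0 < dot3 a a) = (a != 0).
Proof. by rewrite lt_def dot3_ge0 andbT dot3_eq0. Qed.

Lemma enorm3Z s a : enorm3 (s *: a) = `|s| * enorm3 a.
Proof.
by rewrite /enorm3 dot3Zl dot3Zr mulrA -expr2 sqrtrM ?sqr_ge0 // sqrtr_sqr.
Qed.

Lemma enorm3_gt0 a : (0 < enorm3 a) = (a != 0).
Proof. by rewrite /enorm3 sqrtr_gt0 dot3_gt0. Qed.

Lemma enorm3_neq0 a : enorm3 a = 1 -> a != 0.
Proof. by move=> a1; rewrite -enorm3_gt0 a1 ltr01. Qed.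

Lemma row3_eq a b : a 0 0 = b 0 0 -> a 0 1 = b 0 1 -> a 0 2 = b 0 2 -> a = b.
Proof.
move=> e0 e1 e2; apply/rowP => -[[|[|[|//]]] i3].
- by rewrite (_ : Ordinal i3 = 0) //; exact: val_inj.
- by rewrite (_ : Ordinal i3 = 1) //; exact: val_inj.
- by rewrite (_ : Ordinal i3 = 2) //; exact: val_inj.
Qed.

Lemma cross3_cross3_l a b : cross3 (cross3 a b) a = dot3 a a *: b - dot3 a b *: a.
Proof. by apply: row3_eq; rewrite !mxE !dot3E /=; ring. Qed.

Definition orthoproj3 u a : 'rV[R]_3 := a - (dot3 a u / dot3 u u) *: u.

Lemma orthoproj3_id u a : dot3 u a = 0 -> orthoproj3 u a = a.
Proof. by move=> ua; rewrite /orthoproj3 dot3C ua mul0r scale0r subr0. Qed.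

Lemma cross3_cross3_orthoproj3 u a :
  u != 0 -> cross3 (cross3 u a) u = dot3 u u *: orthoproj3 u a.
Proof.
move=> u0; rewrite cross3_cross3_l /orthoproj3 scalerBr scalerA dot3C.
by rewrite mulrC divfK // dot3_eq0.
Qed.

Definition normalize3 a : 'rV[R]_3 := (enorm3 a)^-1 *: a.

Lemma normalize3E a : (enorm3 a)^-1 *: a = normalize3 a.
Proof. by []. Qed.

Lemma normalize3Z s a : 0 < s -> normalize3 (s *: a) = normalize3 a.
Proof.
move=> s0; rewrite /normalize3 enorm3Z gtr0_norm // scalerA invfM mulrAC.
by rewrite mulVf ?gt_eqF // mul1r.
Qed.

Lemma normalize3_id a : enorm3 a = 1 -> normalize3 a = a.
Proof. by move=> a1; rewrite /normalize3 a1 invr1 scale1r. Qed.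

Lemma enorm3_normalize3 a : a != 0 -> enorm3 (normalize3 a) = 1.
Proof.
move=> a0; rewrite /normalize3 enorm3Z ger0_norm ?invr_ge0 ?sqrtr_ge0 //.
by rewrite mulVf // gt_eqF // enorm3_gt0.
Qed.

End Euclid3.

Section QuadraticCurve.
Variable R : realType.
Implicit Types (A B C u : 'rV[R]_3).

Lemma bounded_below_quadratic (a b c : R) :
  (exists m, forall t, m <= a + t * b + t ^+ 2 * c) <-> 0 < c \/ (c = 0 /\ b = 0).
Proof.
split=> [[m mle]|[c0|[-> ->]]]; last 2 first.
- exists (a - b ^+ 2 / (4 * c)) => t; rewrite -subr_ge0.
  have -> : a + t * b + t ^+ 2 * c - (a - b ^+ 2 / (4 * c)) =
      (2 * c * t + b) ^+ 2 / (4 * c) by field; lra.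
  by rewrite divr_ge0 ?sqr_ge0 //; lra.
- by exists a => t; rewrite !mulr0 !addr0.
have c_ge0 : 0 <= c.
  rewrite leNgt; apply/negP => c_lt0.
  set t := Num.sqrt ((`|a - m| + 1) / - c).
  have t2c : t ^+ 2 * c = - (`|a - m| + 1).
    rewrite sqr_sqrtr; last by rewrite divr_ge0 // oppr_ge0 ltW.
    by rewrite invrN mulrN mulNr divfK // lt_eqF.
  have := mle t; have := mle (- t); rewrite sqrrN t2c mulNr.
  have := ler_norm (a - m); lra.
case: (ltrgtP 0 c) c_ge0 => // [c0 _|c0 _]; [by left | right; split=> //].
apply/eqP/contraT => b0; have := mle ((m - a - 1) / b).
by rewrite divfK // -c0 mulr0 addr0; lra.
Qed.

Definition quad_curve A B C : set 'rV[R]_3 :=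
  [set A + t *: B + t ^+ 2 *: C | t in [set: R]].

Lemma dot3_quad u A B C t :
  dot3 u (A + t *: B + t ^+ 2 *: C) = dot3 u A + t * dot3 u B + t ^+ 2 * dot3 u C.
Proof. by rewrite !dot3Dr !dot3Zr. Qed.

Lemma quad_curve_bounded_below u A B C :
  (exists m, forall z, quad_curve A B C z -> m <= dot3 u z) <->
  0 < dot3 u C \/ (dot3 u C = 0 /\ dot3 u B = 0).
Proof.
rewrite -(bounded_below_quadratic (dot3 u A)); split=> -[m mle]; exists m.
  by move=> t; rewrite -dot3_quad; apply: mle; exists t.
by move=> _ [t _ <-]; rewrite dot3_quad.
Qed.

(* Both parametrisations have the same directions of lower boundedness, so the
   half-space <u, C'> > 0 lies in <u, C> >= 0; testing u = C' - M r, with r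
   the part of C orthogonal to C', gives C = g C' with g >= 0, and u = - C'
   rules out g = 0. *)
Lemma quad_curve_leading A B C A' B' C' :
  quad_curve A B C = quad_curve A' B' C' -> C' != 0 ->
  exists2 g, 0 < g & C = g *: C'.
Proof.
move=> E C'0.
have bdd u : 0 < dot3 u C \/ (dot3 u C = 0 /\ dot3 u B = 0) <->
    0 < dot3 u C' \/ (dot3 u C' = 0 /\ dot3 u B' = 0).
  by rewrite -(quad_curve_bounded_below u A) -(quad_curve_bounded_below u A') E.
have C'C'_gt0 : 0 < dot3 C' C' by rewrite dot3_gt0.
have C_ge0 u : 0 < dot3 u C' -> 0 <= dot3 u C.
  by move=> uC'; have [|/ltW|[->]] // := (bdd u).2; left.
set g := dot3 C' C / dot3 C' C'.
set r := C - g *: C'.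
have rC' : dot3 r C' = 0.
  by rewrite dot3C /r dot3Br dot3Zr /g divfK ?subrr // gt_eqF.
have rC : dot3 r C = dot3 r r.
  by rewrite /r [in RHS]dot3Br [in RHS]dot3Zr rC' mulr0 subr0.
have r0 : r = 0.
  apply/eqP; rewrite -dot3_eq0 eq_le dot3_ge0 andbT leNgt; apply/negP => rr0.
  set M := (`|dot3 C' C| + 1) / dot3 r r.
  have := C_ge0 (C' - M *: r); rewrite !dot3Bl !dot3Zl rC' rC mulr0 subr0.
  by rewrite /M divfK ?gt_eqF // (dot3C C'); have := ler_norm (dot3 C C'); lra.
have Cg : C = g *: C' by apply/eqP; rewrite -subr_eq0 -/r r0.
exists g => //; rewrite lt_def divr_ge0 ?C_ge0 ?(ltW C'C'_gt0) // andbT.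
apply/eqP => g0; move: Cg; rewrite g0 => Cg.
have C0 u : dot3 u C = 0 by rewrite Cg dot3Zr mul0r.
have [|[_ C'B]] := (bdd C').2 (or_introl C'C'_gt0); rewrite ?C0 ?ltxx //.
have : 0 < dot3 (- C') C' \/ (dot3 (- C') C' = 0 /\ dot3 (- C') B' = 0).
  by apply/(bdd _).1; right; rewrite C0 -scaleN1r dot3Zl C'B mulr0.
by rewrite -scaleN1r dot3Zl mulN1r => -[|[]]; lra.
Qed.

End QuadraticCurve.

Section AxialVector.
Variable R : realType.
Implicit Types (A B C c d v : 'rV[R]_3) (k : R).

Lemma parabolaSet_quad c (e1 e2 : 'rV[R]_3) k :
  parabolaSet c e1 e2 k = quad_curve c e1 (k *: e2).
Proof.
by apply/seteqP; split=> _ [t _ <-]; exists t => //; rewrite scalerA mulrC.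
Qed.

Lemma halflineSet_quad c d : halflineSet c d = quad_curve c 0 d.
Proof.
apply/seteqP; split=> _ [t t0 <-]; rewrite ?scaler0 ?addr0.
  by exists (Num.sqrt t) => //; rewrite scaler0 addr0 sqr_sqrtr.
by exists (t ^+ 2); rewrite //= sqr_ge0.
Qed.

Lemma halflineSetZ c d (g : R) :
  0 < g -> halflineSet c (g *: d) = halflineSet c d.
Proof.
move=> g0; apply/seteqP; split=> _ [s s0 <-].
  by exists (s * g); [exact: mulr_ge0 s0 (ltW g0) | rewrite scalerA].
exists (s / g); first exact: divr_ge0 s0 (ltW g0).
by rewrite scalerA divfK // gt_eqF.
Qed.

Lemma axial_cand_quad A B C v :
  axial_cand (quad_curve A B C) v -> v = normalize3 C.
Proof.
case=> [[c [e1 [k [_ v1 _ k0 E]]]] | [c [v1 E]]].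
  rewrite parabolaSet_quad in E.
  have kv0 : k *: v != 0 by rewrite scaler_eq0 negb_or gt_eqF // enorm3_neq0.
  have [g g0 ->] := quad_curve_leading E kv0.
  by rewrite scalerA normalize3Z ?mulr_gt0 // normalize3_id.
rewrite halflineSet_quad in E.
have [g g0 ->] := quad_curve_leading E (enorm3_neq0 v1).
by rewrite normalize3Z // normalize3_id.
Qed.

Lemma axial_cand_exists (S : set 'rV[R]_3) :
  is_nd_parabola S \/ is_halfline S -> exists v, axial_cand S v.
Proof.
case=> [[c [e1 [e2 [k [e11 e21 e12 k0 E]]]]] | [c [d [d0 E]]]].
  by exists e2; left; exists c, e1, k.
exists (normalize3 d); right; exists c; split; first exact: enorm3_normalize3.
by rewrite E /normalize3 halflineSetZ // invr_gt0 enorm3_gt0.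
Qed.

Lemma is_axial_vector_quad A B C :
  is_nd_parabola (quad_curve A B C) \/ is_halfline (quad_curve A B C) ->
  is_axial_vector (quad_curve A B C) (normalize3 C).
Proof.
move=> /axial_cand_exists [v vS]; have vC := axial_cand_quad vS.
by split=> [|w /axial_cand_quad //]; rewrite -vC.
Qed.

End AxialVector.

Section CurvatureParabola.
Variables (R : realType) (f : 'rV[R]_2 -> 'rV[R]_3) (q : 'rV[R]_2).
Hypothesis df_fu : forall X, 'D_X f q = X 0 0 *: fu f q.
Hypothesis fu_neq0 : fu f q != 0.

Local Notation u := (fu f q).

Lemma row2_exists (a b : R) : exists X : 'rV[R]_2, X 0 0 = a /\ X 0 1 = b.
Proof. by exists (\row_j [:: a; b]`_j); rewrite !mxE. Qed.

Lemma tangentSpE t : tangentSp f q t <-> exists s, t = s *: u.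
Proof.
split=> [[X _ <-]|[s ->]]; first by exists (X 0 0); rewrite /df df_fu.
by have [X [<- _]] := row2_exists s 0; exists X; rewrite // /df df_fu.
Qed.

Lemma normalSpE n : normalSp f q n <-> dot3 n u = 0.
Proof.
split=> [|nu t /tangentSpE [s ->]]; last by rewrite dot3Zr nu mulr0.
by apply; apply/tangentSpE; exists 1; rewrite scale1r.
Qed.

Lemma nprojE w n : nproj f q w n <-> n = orthoproj3 u w.
Proof.
have uu0 : 0 < dot3 u u by rewrite dot3_gt0.
split=> [[/normalSpE nu /tangentSpE [s ws]]|->].
  have en : n = w - s *: u by rewrite -ws opprB addrC subrK.
  move: nu; rewrite en dot3Bl dot3Zl => /eqP; rewrite subr_eq0 => /eqP wu.
  by rewrite /orthoproj3 wu mulfK // gt_eqF.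
split; [apply/normalSpE | apply/tangentSpE]; rewrite /orthoproj3.
  by rewrite dot3Bl dot3Zl divfK ?subrr // gt_eqF.
by exists (dot3 w u / dot3 u u); rewrite opprB addrC subrK.
Qed.

Local Notation N1 := (orthoproj3 u (fuu f q)).
Local Notation N2 := (orthoproj3 u (fuv f q)).
Local Notation N3 := (orthoproj3 u (fvv f q)).

Lemma secondFF_XXE X n : secondFF_XX f q X n <->
  n = X 0 0 ^+ 2 *: N1 + (2 * X 0 0 * X 0 1) *: N2 + X 0 1 ^+ 2 *: N3.
Proof.
split=> [[n1 [n2 [n3 [/nprojE -> /nprojE -> /nprojE -> ->]]]] //|->].
by exists N1, N2, N3; split=> //; exact/nprojE.
Qed.

Lemma firstFF_XX X : firstFF f q X X = X 0 0 ^+ 2 * dot3 u u.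
Proof. by rewrite /firstFF /df df_fu dot3Zl dot3Zr mulrA -expr2. Qed.

Lemma curvParabolaE : let rho := (enorm3 u)^-1 in
  curvParabola f q = quad_curve (rho ^+ 2 *: N1) ((2 * rho) *: N2) N3.
Proof.
move=> rho; have uu0 : 0 < dot3 u u by rewrite dot3_gt0.
have rho2 : rho ^+ 2 * dot3 u u = 1.
  by rewrite exprVn sqr_sqrtr ?dot3_ge0 // mulVf // gt_eqF.
apply/seteqP; split=> [_ [X [+ /secondFF_XXE ->]]|_ [t _ <-]].
  rewrite firstFF_XX -rho2 => /(mulIf (lt0r_neq0 uu0)) /eqP.
  rewrite eqf_sqr => /orP [] /eqP ->; [exists (X 0 1) | exists (- X 0 1)] => //;
    by rewrite !scalerA; congr (_ + _ + _); congr (_ *: _); ring.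
have [X [X0 X1]] := row2_exists rho t.
exists X; rewrite firstFF_XX X0 rho2; split=> //; apply/secondFF_XXE.
by rewrite X0 X1 !scalerA; congr (_ + _ + _); congr (_ *: _); ring.
Qed.

End CurvatureParabola.

Section DirectionalDerivative.
Variables (R : realType) (V : normedModType R).

Lemma dnbhs0_mulr (k : R) : k != 0 -> (fun h : R => h * k) @ 0^' --> (0 : R)^'.
Proof.
move=> k0 P P0.
have [e e0 eP] : exists2 e : R, 0 < e & forall y, `|y| < e -> y != 0 -> P y.
  have /nbhs_normP [e e0 eP] : \forall y \near 0, y != 0 -> P y := P0.
  by exists e => // y ye; apply: eP; rewrite /= sub0r normrN.
change (\forall h \near 0^', P (h * k)).
have k_gt0 : 0 < `|k| by rewrite normr_gt0.
near=> h; apply: eP; last by rewrite mulf_neq0 //; near: h; exact: nbhs_dnbhs_neq.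
rewrite normrM -ltr_pdivlMr //; near: h; exact: dnbhs0_lt (divr_gt0 e0 k_gt0).
Unshelve. all: by end_near.
Qed.

Lemma derive_dirZ (W : normedModType R) (f : V -> W) x v (k : R) :
  derivable f x v -> 'D_(k *: v) f x = k *: 'D_v f x.
Proof.
move=> df; have [->|k0] := eqVneq k 0; first by rewrite !scale0r derive0.
apply: cvg_lim => //.
have -> : (fun h => h^-1 *: ((f \o shift x) (h *: (k *: v)) - f x)) =
    (fun h => k *: ((h * k)^-1 *: ((f \o shift x) ((h * k) *: v) - f x))).
  by apply/funext => h; rewrite !scalerA invfM mulrCA mulfV // mulr1.
have dQ := cvg_comp _ _ (dnbhs0_mulr k0) df.
exact: (cvgZl_tmp dQ).
Qed.

Lemma is_derive_cvg (U W : normedModType R) (f : U -> W) x v (df : W) :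
  (fun h => h^-1 *: ((f \o shift x) (h *: v) - f x)) @ 0^' --> df ->
  is_derive x v f df.
Proof. by move=> dv; apply: DeriveDef; [exact: cvgP dv | exact: cvg_lim dv]. Qed.

Lemma is_derive_line (W : normedModType R) (f : V -> W) (y w : V) (t : R) :
  derivable f (y + t *: w) w ->
  is_derive t 1 (fun s => f (y + s *: w)) ('D_w f (y + t *: w)).
Proof.
have E : (fun h : R => h^-1 *: (((fun s => f (y + s *: w)) \o shift t) (h *: 1)
      - f (y + t *: w))) =
    (fun h => h^-1 *: ((f \o shift (y + t *: w)) (h *: w) - f (y + t *: w))).
  apply/funext => h /=; congr (_ *: (f _ - _)).
  by rewrite [h *: 1]mulr1 scalerDl addrCA addrA.
by move=> dw; apply: is_derive_cvg; rewrite E; exact: dw.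
Qed.

Lemma MVT_origin (phi : R -> R) (s : R) :
  (forall t, `|t| <= `|s| -> derivable phi t 1) ->
  exists2 c, `|c| <= `|s| & phi s - phi 0 = s * 'D_1 phi c.
Proof.
move=> dphi.
have mvt a b : a <= b -> `|a| <= `|s| -> `|b| <= `|s| ->
    exists2 c, `|c| <= `|s| & phi b - phi a = 'D_1 phi c * (b - a).
  move=> ab; rewrite !ler_norml => /andP [sa aS] /andP [sb bS].
  have ab_s z : z \in `[a, b] -> `|z| <= `|s|.
    by rewrite in_itv /= ler_norml => /andP [az zb]; apply/andP; split; lra.
  have [||c /ab_s cs ->] := @MVT_segment R phi ('D_1 phi) a b ab.
  - by move=> z /subset_itv_oo_cc /ab_s /dphi /derivableP.
  - by apply: derivable_within_continuous => z /ab_s; exact: dphi.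
  by exists c.
have [s0|s0] := leP 0 s.
  have [||c cs ->] := mvt 0 s s0; rewrite ?normr0 // subr0 mulrC.
  by exists c.
have [||c cs e] := mvt s 0 (ltW s0); rewrite ?normr0 //.
by exists c => //; rewrite -opprB e sub0r mulrN opprK mulrC.
Qed.

Lemma MVT_line (f : V -> R) (y w : V) (s : R) :
  (forall t, `|t| <= `|s| -> derivable f (y + t *: w) w) ->
  exists2 c, `|c| <= `|s| & f (y + s *: w) - f y = s * 'D_w f (y + c *: w).
Proof.
move=> dw; have [t ts|c cs] := @MVT_origin (fun t => f (y + t *: w)) s.
  by have [] := is_derive_line (dw t ts).
have [_ ->] := is_derive_line (dw c cs).
by rewrite scale0r addr0 => ->; exists c.
Qed.

(* By the mean value theorem the quotient is [Dw] at a point within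
   [|h| (|u| + |w|)] of [x], so it is controlled by the continuity of [Dw]. *)
Lemma cvg_shifted_diff_quotient (f : V -> R) (x u w : V) (Dw : V -> R) :
  (\forall y \near x, is_derive y w f (Dw y)) -> {for x, continuous Dw} ->
  (fun h => h^-1 *: (f (h *: u + x + h *: w) - f (h *: u + x))) @ 0^' --> Dw x.
Proof.
move=> dw cDw; apply/cvgrPdist_le => e e0.
have /nbhs_normP [d d0 dP] : \forall y \near x,
    is_derive y w f (Dw y) /\ `|Dw x - Dw y| <= e.
  by apply/near_andP; split=> //; move/cvgrPdist_le : cDw; exact.
set K := `|u| + `|w| + 1.
have K0 : 0 < K by rewrite /K; have := normr_ge0 u; have := normr_ge0 w; lra.
near=> h.
have h0 : h != 0 by near: h; exact: nbhs_dnbhs_neq.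
have hK : `|h| * K < d.
  by rewrite -ltr_pdivlMr //; near: h; exact: dnbhs0_lt (divr_gt0 d0 K0).
have near_x t : `|t| <= `|h| -> `|x - (h *: u + x + t *: w)| < d.
  move=> th; rewrite addrAC opprD addrCA subrr addr0 normrN.
  apply: le_lt_trans (ler_normD _ _) _; rewrite !normrZ.
  have := normr_ge0 u; have := normr_ge0 w; have := normr_ge0 h.
  rewrite /K in hK; nra.
have [c ch ->] : exists2 c, `|c| <= `|h| &
    f (h *: u + x + h *: w) - f (h *: u + x) = h * 'D_w f (h *: u + x + c *: w).
  by apply: MVT_line => t /near_x /dP [[]].
have [_ ->] := (dP _ (near_x c ch)).1.
by rewrite scalerA mulVf // scale1r; exact: (dP _ (near_x c ch)).2.
Unshelve. all: by end_near.
Qed.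

Lemma is_derive_dirD (f : V -> R) (x u w : V) (Dw : V -> R) :
  derivable f x u -> (\forall y \near x, is_derive y w f (Dw y)) ->
  {for x, continuous Dw} -> is_derive x (u + w) f ('D_u f x + Dw x).
Proof.
move=> du dw cDw; apply: is_derive_cvg.
have -> : (fun h => h^-1 *: ((f \o shift x) (h *: (u + w)) - f x)) =
    (fun h => h^-1 *: ((f \o shift x) (h *: u) - f x) +
      h^-1 *: (f (h *: u + x + h *: w) - f (h *: u + x))).
  apply/funext => h; rewrite /= -scalerDr (addrC (f _ - _)) addrA subrK.
  by rewrite [h *: (u + w)]scalerDr addrAC.
by apply: cvgD; [exact: du | exact: cvg_shifted_diff_quotient].
Qed.

Lemma cvg_of_coord n (T : Type) (F : set_system T) {FF : Filter F}
    (G : T -> 'rV[R]_n) (l : 'rV[R]_n) :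
  (forall k, (fun t => G t 0 k) @ F --> l 0 k) -> G @ F --> l.
Proof.
move=> Gl; apply/cvgrPdist_le => e e0.
have Gk k : \forall t \near F, `|l 0 k - G t 0 k| <= e.
  by move/cvgrPdist_le : (Gl k); exact.
have := filter_forall FF Gk.
apply: filterS => t Gt; change (mx_norm (l - G t) <= e); rewrite mx_normrE.
apply: bigmax_le => [|[i k] _]; first exact: ltW.
by rewrite ord1 !mxE; exact: Gt.
Qed.

Lemma coord_diff_quotient n (f : V -> 'rV[R]_n) x v k :
  (fun h => (h^-1 *: ((f \o shift x) (h *: v) - f x)) 0 k) =
  (fun h => h^-1 *: (((fun y => f y 0 k) \o shift x) (h *: v) - f x 0 k)).
Proof. by apply/funext => h; rewrite !mxE. Qed.

Lemma is_derive_coord n (f : V -> 'rV[R]_n) x v k :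
  derivable f x v -> is_derive x v (fun y => f y 0 k) ('D_v f x 0 k).
Proof.
move=> df.
have dk : (fun h => (h^-1 *: ((f \o shift x) (h *: v) - f x)) 0 k) @ 0^' -->
    'D_v f x 0 k := cvg_comp _ _ df (@coord_continuous _ 1 n 0 k ('D_v f x)).
by rewrite coord_diff_quotient in dk; exact: is_derive_cvg.
Qed.

Lemma is_derive_of_coord n (f : V -> 'rV[R]_n) x v (df : 'rV[R]_n) :
  (forall k, is_derive x v (fun y => f y 0 k) (df 0 k)) -> is_derive x v f df.
Proof.
move=> dfk; apply: is_derive_cvg; apply: cvg_of_coord => k.
rewrite coord_diff_quotient.
by have [dk <-] := dfk k; exact: dk.
Qed.

Lemma is_derive_dirD_rV n (f : V -> 'rV[R]_n) (x u w : V) (Dw : V -> 'rV[R]_n) :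
  derivable f x u -> (\forall y \near x, is_derive y w f (Dw y)) ->
  {for x, continuous Dw} -> is_derive x (u + w) f ('D_u f x + Dw x).
Proof.
move=> du dw cDw; apply: is_derive_of_coord => k; rewrite mxE.
have [duk <-] := is_derive_coord k du.
apply: (@is_derive_dirD _ _ _ _ (fun y => Dw y 0 k)) => //.
  by apply: filterS dw => y [dy <-]; exact: is_derive_coord.
exact: continuous_comp cDw (@coord_continuous _ 1 n 0 k _).
Qed.

End DirectionalDerivative.

Section SmoothGerm.
Variables (R : realType) (f : 'rV[R]_2 -> 'rV[R]_3) (q : 'rV[R]_2).
Hypothesis f_smooth : smooth_near f q.

Lemma row2_decomp (X : 'rV[R]_2) : X = X 0 0 *: e_u R + X 0 1 *: e_v R.
Proof.
apply/rowP => -[[|[|//]] i2]; rewrite !mxE /= ?mulr1 ?mulr0 ?addr0 ?add0r;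
  by congr (X 0 _); apply: val_inj.
Qed.

Lemma smooth_near_derivable v : \forall y \near q, derivable f y v.
Proof. by apply: filterS (f_smooth [::]) => y []. Qed.

Lemma smooth_near_continuous_derive v : {for q, continuous ('D_v f)}.
Proof. by have [] := nbhs_singleton (f_smooth [:: v]). Qed.

Lemma derive_smooth X : 'D_X f q = X 0 0 *: fu f q + X 0 1 *: fv f q.
Proof.
have dq v : derivable f q v := nbhs_singleton (smooth_near_derivable v).
set w := X 0 1 *: e_v R.
have dw : \forall y \near q, is_derive y w f ('D_w f y).
  by apply: filterS (smooth_near_derivable w) => y; exact: derivableP.
have [_ uw] := is_derive_dirD_rV (dq (X 0 0 *: e_u R)) dw
  (@smooth_near_continuous_derive w).
rewrite /fu /fv -(derive_dirZ (X 0 0) (dq _)) -(derive_dirZ (X 0 1) (dq _)).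
by rewrite -/w -uw {1}(row2_decomp X).
Qed.

End SmoothGerm.

Theorem mainTheorem6 (R : realType) (f : 'rV[R]_2 -> 'rV[R]_3) (q : 'rV[R]_2) :
  smooth_near f q ->
  corank1 f q ->
  is_nd_parabola (curvParabola f q) \/ is_halfline (curvParabola f q) ->
  fu f q != 0 -> fv f q = 0 ->
  is_axial_vector (curvParabola f q)
    ((enorm3 (cross3 (cross3 (fu f q) (fvv f q)) (fu f q)))^-1 *:
       cross3 (cross3 (fu f q) (fvv f q)) (fu f q))
  /\ (enorm3 (fu f q) = 1 -> enorm3 (fvv f q) = 1 -> dot3 (fu f q) (fvv f q) = 0 ->
      is_axial_vector (curvParabola f q) (fvv f q)).
Proof.
move=> f_smooth _ shape fu0 fv0.
have df_fu X : 'D_X f q = X 0 0 *: fu f q.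
  by rewrite derive_smooth // fv0 scaler0 addr0.
rewrite (curvParabolaE df_fu fu0) /= in shape *.
have axial := is_axial_vector_quad shape.
have uu_gt0 : 0 < dot3 (fu f q) (fu f q) by rewrite dot3_gt0.
rewrite (cross3_cross3_orthoproj3 _ fu0) normalize3E (normalize3Z _ uu_gt0).
split=> [|_ fvv1 u_fvv]; first exact: axial.
(* rewriting [orthoproj3_id] inside [axial] would try to unify [fuu f q] with
   [fvv f q] by unfolding the derivatives *)
have fvv_axial : normalize3 (orthoproj3 (fu f q) (fvv f q)) = fvv f q.
  by rewrite orthoproj3_id // normalize3_id.
by rewrite fvv_axial in axial.
Qed.
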